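(* Let $q$ be a prime power, let $\ell \geq 1$ and $n \geq 2\ell+1$ be integers, and put $k = n - \ell$. Let $f$ be a monic irreducible polynomial of degree $\ell$ over $\mathbb{F}_q$ with $\ell \times \ell$ companion matrix $M$, and let $\mathcal{C} = \mathrm{span}_{\mathbb{F}_q}(I, M, M^2, \ldots, M^{\ell-1}) \subseteq \mathbb{F}_q^{\ell \times \ell}$ (the matrix representation of $\mathbb{F}_{q^\ell}$ over $\mathbb{F}_q$), where $I$ is the $\ell \times \ell$ identity matrix. For a matrix $A$ write $[A]_1$ for its first column, and let $\mathbf{0}$ denote the $\ell \times (n-2\ell-1)$ zero matrix (empty if $n = 2\ell+1$). Define \[ \mathcal{G} = \bigl\{ \mathrm{rowspace}\,[\, I \mid A \mid [A^2]_1 \mid \mathbf{0}\,] : A \in \mathcal{C} \bigr\}, \] a family of subspaces of $\mathbb{F}_q^n$, and let $\mathcal{F} = \{ U^\perp : U \in \mathcal{G}\}$, where $U^\perp$ is the orthogonal complement of $U$ with respect to the standard bilinear form on $\mathbb{F}_q^n$. Then $\mathcal{F}$ is a family of $k$-dimensional subspaces of $\mathbb{F}_q^n$ of size $q^\ell = q^{n-k}$, and for every $s \geq 3$, $\mathcal{F}$ is set-like $s$-sunflower-free.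
   Context: A $k$-space means a $k$-dimensional subspace of $\mathbb{F}_q^n$. A family (a set, not a multiset) of $s$ distinct $k$-spaces $S_1, \ldots, S_s$ of $\mathbb{F}_q^n$ is a set-like $s$-sunflower with kernel $K$ if $K = S_i \cap S_j$ for all distinct $i, j$. A family of $k$-spaces is set-like $s$-sunflower-free if no $s$ of its members form a set-like $s$-sunflower. *)

From HB Require Import structures.
From mathcomp Require Import all_boot all_order all_algebra all_field.
Set Implicit Arguments. Unset Strict Implicit. Unset Printing Implicit Defensive.
Import GRing.Theory.
Local Open Scope ring_scope.

Section Defs.
Variable F : finFieldType.

(* The l x l companion matrix of f (MathComp's [companionmx], viewed at
   dimension l; exact when size f = l.+1, i.e. deg f = l). *)
Definition companion (l : nat) (f : {poly F}) : 'M[F]_l :=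
  conform_mx (0 : 'M[F]_l) (companionmx f).

Definition mat_span_powers (l : nat) (M : 'M[F]_l) : {set 'M[F]_l} :=
  [set \sum_(i < l) c i *: M ^+ i | c : {ffun 'I_l -> F}].

Definition first_col (l : nat) (A : 'M[F]_l) : 'M[F]_(l, 1) :=
  A *m \col_(j < l) ((j : nat) == 0%N)%:R.

(* The l x n matrix [ I | A | [A^2]_1 | 0 ]  (0 is l x (n - 2l - 1));
   exact when n >= 2l+1. *)
Definition gen_mx (l n : nat) (A : 'M[F]_l) : 'M[F]_(l, n) :=
  conform_mx (0 : 'M[F]_(l, n))
    (row_mx (1%:M : 'M[F]_l)
       (row_mx A (row_mx (first_col (A ^+ 2))
                         (0 : 'M[F]_(l, n - (l + l).+1))))).

(* Orthogonal complement of the row space of U w.r.t. the standard bilinear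
   form v.w = v *m w^T on F^n: all v with v *m U^T = 0. *)
Definition perp_mx (m n : nat) (U : 'M[F]_(m, n)) : 'M[F]_n := kermx U^T.

Definition set_like_sunflower (n s : nat) (S : 'I_s -> 'M[F]_n) : Prop :=
  (forall i j, i != j -> ~~ (S i == S j)%MS) /\
  exists K : 'M[F]_n, forall i j, i != j -> (S i :&: S j == K)%MS.

(* A family (set of subspaces, each represented by a canonical matrix
   <<U>>) is set-like s-sunflower-free. *)
Definition sunflower_free (n s : nat) (Fam : {set 'M[F]_n}) : Prop :=
  forall S : 'I_s -> 'M[F]_n, (forall i, S i \in Fam) ->
    ~ set_like_sunflower S.

End Defs.

(* If three members S0, S1, S2 of a set-like sunflower share the kernel, then
   S0 :&: S1 <= S2, so dually the row space U2 = [I | C | C^2 e] (e the first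
   unit column) lies in U0 + U1 for U0 = [I | A | A^2 e], U1 = [I | B | B^2 e].
   Comparing the identity blocks, C = D0 A + D1 B with D0 + D1 = 1, and the same
   combination gives C^2 e = D0 A^2 e + D1 B^2 e.  The matrices of the span of
   the powers of M commute, so this forces (C - A)(C - B) e = 0.  But that span
   is a copy of GF(q^l) because the minimal polynomial f of M is irreducible:
   C - A and C - B are invertible, and e = 0, a contradiction. *)

From HB Require Import structures.
From mathcomp Require Import all_boot all_order all_algebra all_field.
Set Implicit Arguments. Unset Strict Implicit. Unset Printing Implicit Defensive.
Import GRing.Theory.
Local Open Scope ring_scope.

Section OrthogonalComplement.
Variable F : fieldType.

Lemma kermx_trS m1 m2 n (X : 'M[F]_(m1, n)) (Y : 'M[F]_(m2, n)) :
  (Y <= X)%MS -> (kermx X^T <= kermx Y^T)%MS.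
Proof.
case/submxP=> D ->; apply/sub_kermxP.
by rewrite trmx_mul mulmxA mulmx_ker mul0mx.
Qed.

Lemma kermx_trK m n (X : 'M[F]_(m, n)) : (kermx (kermx X^T)^T :=: X)%MS.
Proof.
have sXK : (X <= kermx (kermx X^T)^T)%MS.
  by apply/sub_kermxP; rewrite -[X in X *m _]trmxK -trmx_mul mulmx_ker trmx0.
apply/eqmx_sym/eqmxP; rewrite -(mxrank_leqif_eq sXK).
by rewrite !(mxrank_ker, mxrank_tr) subKn ?rank_leq_col.
Qed.

Lemma sub_kermx_tr m1 m2 n (X : 'M[F]_(m1, n)) (Y : 'M[F]_(m2, n)) :
  (kermx X^T <= kermx Y^T)%MS = (Y <= X)%MS.
Proof.
apply/idP/idP=> [/kermx_trS|/kermx_trS //].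
by rewrite !kermx_trK.
Qed.

Lemma kermx_tr_col_mx m1 m2 n (X : 'M[F]_(m1, n)) (Y : 'M[F]_(m2, n)) :
  (kermx (col_mx X Y)^T :=: kermx X^T :&: kermx Y^T)%MS.
Proof.
apply/eqmxP/andP; split.
  have := submx_refl (col_mx X Y); rewrite col_mx_sub => /andP[sX sY].
  by rewrite sub_capmx !kermx_trS.
apply/sub_kermxP; rewrite tr_col_mx mul_mx_row.
by rewrite !(sub_kermxP _) ?capmxSl ?capmxSr ?row_mx0.
Qed.

End OrthogonalComplement.

Section GeneratorMatrix.
Variables (F : finFieldType) (l m : nat).

Definition gen_blocks (A : 'M[F]_l) : 'M[F]_(l, l + (l + (1 + m))) :=
  row_mx 1%:M (row_mx A (row_mx (first_col (A ^+ 2)) 0)).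

Lemma gen_mxE (A : 'M[F]_l) : gen_mx (l + (l + (1 + m))) A = gen_blocks A.
Proof.
rewrite /gen_mx (_ : (l + (l + (1 + m)) - (l + l).+1)%N = m) ?conform_mx_id //.
by rewrite addnA -addSnnS addnC addnK.
Qed.

Lemma rank_gen_blocks A : \rank (gen_blocks A) = l.
Proof.
apply/eqP; rewrite eqn_leq rank_leq_row -{1}(mxrank1 F l).
have <- : gen_blocks A *m col_mx 1%:M 0 = 1%:M.
  by rewrite mul_row_col mul1mx mulmx0 addr0.
exact: mxrankM_maxl.
Qed.

Lemma gen_blocks_sub_eq A B : (gen_blocks A <= gen_blocks B)%MS -> A = B.
Proof.
case/submxP=> D; rewrite /gen_blocks !mul_mx_row mulmx1.
by case/eq_row_mx=> <- /eq_row_mx[->]; rewrite mul1mx.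
Qed.

Lemma perp_gen_blocks_inj :
  injective (fun A : 'M[F]_l => <<perp_mx (gen_blocks A)>>%MS).
Proof.
move=> A B /= /genmxP/andP[sAB _].
by apply/esym/gen_blocks_sub_eq; rewrite -sub_kermx_tr.
Qed.

Lemma gen_blocks_sub_col_mx A B C :
  (gen_blocks C <= col_mx (gen_blocks A) (gen_blocks B))%MS ->
  exists D0 D1 : 'M[F]_l, [/\ D0 + D1 = 1%:M, C = D0 *m A + D1 *m B &
    first_col (C ^+ 2) = D0 *m first_col (A ^+ 2) + D1 *m first_col (B ^+ 2)].
Proof.
case/submxP=> D; rewrite -[D]hsubmxK mul_row_col /gen_blocks !mul_mx_row.
rewrite !add_row_mx !mulmx1 => /eq_row_mx[-> /eq_row_mx[-> /eq_row_mx[-> _]]].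
by exists (lsubmx D), (rsubmx D).
Qed.

End GeneratorMatrix.

Lemma affine_comb_sq_eq0 (F : fieldType) n k (A B C D0 D1 : 'M[F]_n)
    (e : 'M[F]_(n, k)) :
  A *m B = B *m A -> A *m C = C *m A ->
  C - A \in unitmx -> C - B \in unitmx ->
  D0 + D1 = 1%:M -> C = D0 *m A + D1 *m B ->
  C ^+ 2 *m e = D0 *m (A ^+ 2 *m e) + D1 *m (B ^+ 2 *m e) -> e = 0.
Proof.
move=> cAB cAC uCA uCB sumD defC defC2.
have combB p (X Y : 'M_(n, p)) : D0 *m X + D1 *m Y - X = D1 *m (Y - X).
  rewrite -[X in _ - X]mul1mx -sumD mulmxDl mulmxBr.
  by rewrite [D0 *m X + _]addrC addrKA.
have subr_sqr X : A *m X = X *m A -> X ^+ 2 - A ^+ 2 = (X - A) *m (X + A).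
  by rewrite !mulmxE => cAX; rewrite mulrDr !mulrBl cAX addrA subrK !expr2.
have dCA : C - A = D1 *m (B - A) by rewrite defC combB.
have dC2A : C ^+ 2 *m e - A ^+ 2 *m e = D1 *m (B ^+ 2 *m e - A ^+ 2 *m e).
  by rewrite defC2 combB.
have : (C - A) *m ((C - B) *m e) = 0.
  (* (C - A)(C - B) = (C^2 - A^2) - (C - A)(B + A), and both terms are D1 times
     the corresponding expressions at B. *)
  have -> : C - B = C + A - (B + A) by rewrite opprD addrACA subrr addr0.
  rewrite [(C + A - _) *m e]mulmxBl mulmxBr !mulmxA -subr_sqr // dCA.
  rewrite -[D1 *m _ *m _]mulmxA.
  by rewrite -subr_sqr // -[D1 *m _ *m e]mulmxA !mulmxBl dC2A subrr.
move/(canRL (mulKmx uCA)); rewrite mulmx0.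
by move/(canRL (mulKmx uCB)); rewrite mulmx0.
Qed.

Section MinimalPolynomial.
Variables (F : fieldType) (n : nat) (M : 'M[F]_n.+1).

Lemma horner_mx_small_inj (p r : {poly F}) :
  (size p <= degree_mxminpoly M)%N -> (size r <= degree_mxminpoly M)%N ->
  horner_mx M p = horner_mx M r -> p = r.
Proof.
move=> szp szr eq_pr.
rewrite -(modp_small (q := mxminpoly M) (p := p)) ?size_mxminpoly ?ltnS //.
by rewrite -horner_mxK eq_pr horner_mxK modp_small ?size_mxminpoly ?ltnS.
Qed.

Lemma mxminpoly_eq_irreducible (f : {poly F}) :
  f \is monic -> irreducible_poly f -> horner_mx M f = 0 -> mxminpoly M = f.
Proof.
move=> f_monic [_ f_irr] /mxminpoly_min dvd_f.
have sz_min : size (mxminpoly M) != 1%N.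
  by rewrite size_mxminpoly eqSS -lt0n mxminpoly_nonconstant.
by apply/eqP; rewrite -eqp_monic ?mxminpoly_monic ?f_irr.
Qed.

Lemma horner_mx_unitmx (p : {poly F}) : irreducible_poly (mxminpoly M) ->
  horner_mx M p != 0 -> horner_mx M p \in unitmx.
Proof.
move=> irr_min; rewrite -dvd_mxminpoly -irreducible_poly_coprime //.
case/Bezout_eq1_coprimepP=> [[u v]] /(congr1 (horner_mx M)).
rewrite rmorphD !rmorphM /= mx_root_minpoly mulr0 add0r rmorph1 -mulmxE.
by case/mulmx1_unit.
Qed.

End MinimalPolynomial.

Section SpanOfPowers.
Variables (F : finFieldType) (n : nat) (M : 'M[F]_n.+1).

Lemma sum_powers_horner_mx (c : {ffun 'I_n.+1 -> F}) :
  \sum_(i < n.+1) c i *: M ^+ i = horner_mx M (\poly_(i < n.+1) c (inord i)).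
Proof.
rewrite poly_def linear_sum; apply: eq_bigr => i _.
by rewrite linearZ /= rmorphXn /= horner_mx_X inord_val.
Qed.

Lemma mat_span_powers_horner_mx A :
  A \in mat_span_powers M -> exists p, A = horner_mx M p.
Proof. by case/imsetP=> c _ ->; rewrite sum_powers_horner_mx; eexists. Qed.

Lemma mat_span_powers_comm A B :
  A \in mat_span_powers M -> B \in mat_span_powers M -> A *m B = B *m A.
Proof.
move=> /mat_span_powers_horner_mx[p ->] /mat_span_powers_horner_mx[r ->].
by rewrite mulmxE -!rmorphM /= mulrC.
Qed.

Lemma mat_span_powers_subr_unitmx A B : irreducible_poly (mxminpoly M) ->
  A \in mat_span_powers M -> B \in mat_span_powers M -> A != B ->
  A - B \in unitmx.
Proof.
move=> irr_min /mat_span_powers_horner_mx[p ->] /mat_span_powers_horner_mx[r ->].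
by rewrite -subr_eq0 -rmorphB; apply: horner_mx_unitmx.
Qed.

Lemma card_mat_span_powers :
  degree_mxminpoly M = n.+1 -> #|mat_span_powers M| = (#|F| ^ n.+1)%N.
Proof.
move=> degM; rewrite card_imset ?card_ffun ?card_ord // => c1 c2.
rewrite !sum_powers_horner_mx => /horner_mx_small_inj.
rewrite degM !size_poly => /(_ isT isT) eq_c; apply/ffunP=> i.
have := congr1 (fun p : {poly F} => p`_i) eq_c.
by rewrite /= !coef_poly ltn_ord inord_val.
Qed.

End SpanOfPowers.

Lemma mxminpoly_companion (F : finFieldType) n (f : {poly F}) :
  f \is monic -> size f = n.+2 -> irreducible_poly f ->
  mxminpoly (companion n.+1 f) = f.
Proof.
move=> f_monic sz_f f_irr; apply: mxminpoly_eq_irreducible => //.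
have charE : char_poly (companion n.+1 f) = f.
  rewrite /companion -[RHS](companionmxK f_monic).
  by move: (companionmx f); rewrite sz_f => X; rewrite conform_mx_id.
by rewrite -{2}charE Cayley_Hamilton.
Qed.

Lemma set_like_sunflower_capS (F : finFieldType) n s (S : 'I_s -> 'M[F]_n)
    i j k :
  set_like_sunflower S -> i != j -> i != k -> (S i :&: S j <= S k)%MS.
Proof.
case=> _ [K kerK] ij ik; have /andP[sIJK _] := kerK i j ij.
have /andP[_ sKIK] := kerK i k ik.
by rewrite (submx_trans sIJK) // (submx_trans sKIK) ?capmxSr.
Qed.

Section PerpendicularFamily.
Variables (F : finFieldType) (l m : nat) (M : 'M[F]_l.+1).
Hypothesis irr_min : irreducible_poly (mxminpoly M).

Lemma gen_blocks_not_sub_col_mx A B C :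
  A \in mat_span_powers M -> B \in mat_span_powers M ->
  C \in mat_span_powers M -> C != A -> C != B ->
  ~~ (gen_blocks m C <= col_mx (gen_blocks m A) (gen_blocks m B))%MS.
Proof.
move=> CA CB CC neqCA neqCB; apply/negP.
case/gen_blocks_sub_col_mx=> D0 [D1 [sumD defC defC2]].
have /matrixP/(_ 0 0) := affine_comb_sq_eq0 (mat_span_powers_comm CA CB)
  (mat_span_powers_comm CA CC) (mat_span_powers_subr_unitmx irr_min CC CA neqCA)
  (mat_span_powers_subr_unitmx irr_min CC CB neqCB) sumD defC defC2.
by rewrite !mxE /=; apply/eqP; rewrite oner_eq0.
Qed.

Lemma sunflower_free_perp_gen_blocks s : (3 <= s)%N ->
  sunflower_free s
    [set <<perp_mx (gen_blocks m A)>>%MS | A in mat_span_powers M].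
Proof.
move=> s_ge3 S memS sunS.
pose i0 : 'I_s := Ordinal (ltnW (ltnW s_ge3)).
pose i1 : 'I_s := Ordinal (ltnW s_ge3).
pose i2 : 'I_s := Ordinal s_ge3.
have [A0 CA0 SA0] := imsetP (memS i0).
have [A1 CA1 SA1] := imsetP (memS i1).
have [A2 CA2 SA2] := imsetP (memS i2).
have neqA i j Ai Aj : i != j -> S i = <<perp_mx (gen_blocks m Ai)>>%MS ->
    S j = <<perp_mx (gen_blocks m Aj)>>%MS -> Ai != Aj.
  move=> ij SAi SAj; apply: contraNneq (sunS.1 i j ij) => eqA.
  by rewrite SAi SAj eqA !submx_refl.
have := set_like_sunflower_capS sunS (isT : i0 != i1) (isT : i0 != i2).
rewrite SA0 SA1 SA2 (cap_eqmx (genmxE _) (genmxE _)) genmxE /perp_mx.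
rewrite -kermx_tr_col_mx sub_kermx_tr; apply/negP.
apply: gen_blocks_not_sub_col_mx => //.
  exact: (neqA i2 i0).
exact: (neqA i2 i1).
Qed.

End PerpendicularFamily.

Theorem mainTheorem1 (F : finFieldType) (l n : nat) (f : {poly F}) :
  (1 <= l)%N -> (l.*2.+1 <= n)%N ->
  f \is monic -> size f = l.+1 -> irreducible_poly f ->
  let q := #|F| in
  let k := (n - l)%N in
  let M : 'M[F]_l := companion l f in
  let C : {set 'M[F]_l} := mat_span_powers M in
  let Fam : {set 'M[F]_n} :=
    [set <<perp_mx (gen_mx n A)>>%MS | A in C] in
  (forall X, X \in Fam -> \rank X = k) /\
  #|Fam| = (q ^ l)%N /\
  (forall s : nat, (3 <= s)%N -> sunflower_free s Fam).
Proof.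
case: l => [//|l] _ le_n f_monic sz_f f_irr q k M C Fam.
have [m def_n] : exists m, n = (l.+1 + (l.+1 + (1 + m)))%N.
  by exists (n - (l.+1).*2.+1)%N; rewrite !addnA addn1 addnn subnKC.
subst n.
have minM : mxminpoly M = f by apply: mxminpoly_companion.
have -> : Fam = [set <<perp_mx (gen_blocks m A)>>%MS | A in C].
  by apply: eq_imset => A; rewrite gen_mxE.
split; [|split].
- move=> _ /imsetP[A _ ->].
  by rewrite genmxE mxrank_ker mxrank_tr rank_gen_blocks.
- rewrite card_imset; last exact: perp_gen_blocks_inj.
  apply: card_mat_span_powers.
  by apply/eqP; rewrite -eqSS -size_mxminpoly minM sz_f.
- by move=> s s_ge3; apply: sunflower_free_perp_gen_blocks; rewrite ?minM.
Qed.
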